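(* Let $\phi$ be a topological flow on a compact metric space $(M,\mathrm{dist})$ having the oriented shadowing property. If $p\in\mathrm{Sing}(\phi)$ is Lyapunov stable, then $\bigcap_{n\ge1}\Omega^+(p,1/n)=\{p\}$; if $p\in\mathrm{Sing}(\phi)$ is Lyapunov unstable, then $\bigcap_{n\ge1}\Omega^-(p,1/n)=\{p\}$.
   Context: A topological flow is a continuous $\phi:\mathbb{R}\times M\to M$ with $\phi(0,x)=x$, $\phi(s+t,x)=\phi(s,\phi(t,x))$; $\mathrm{Sing}(\phi)$ is its set of fixed points. A singularity $p$ is Lyapunov stable if for every neighborhood $V$ of $p$ there is a neighborhood $U$ of $p$ with $\phi(t,x)\in V$ for all $t\ge0$, $x\in U$; Lyapunov unstable if the same holds for $t\le0$. A $d$-pseudotrajectory is a map $\xi:\mathbb{R}\to M$ with $\mathrm{dist}(\xi(t+s),\phi(s,\xi(t)))<d$ for all $t\in\mathbb{R}$, $s\in[0,1]$; $\mathrm{Ps}(d)$ is the set of them. $\mathrm{Rep}$ is the set of orientation-preserving homeomorphisms of $\mathbb{R}$. $\phi$ has the oriented shadowing property if for every $\varepsilon>0$ there is $d>0$ such that for every $\xi\in\mathrm{Ps}(d)$ there are $x\in M$, $h\in\mathrm{Rep}$ with $\mathrm{dist}(\xi(t),\phi(h(t),x))<\varepsilon$ for all $t$. $B(\varepsilon,p)$ is the open ball. For $p\in M$, $\varepsilon>0$: $\Omega^+(p,\varepsilon)=\{\xi(t): \xi\in\mathrm{Ps}(\varepsilon),\ \xi(0)\in B(\varepsilon,p),\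 t\ge0\}$ and $\Omega^-(p,\varepsilon)=\{\xi(t): \xi\in\mathrm{Ps}(\varepsilon),\ \xi(0)\in B(\varepsilon,p),\ t\le0\}$. *)

From HB Require Import structures.
From mathcomp Require Import all_boot all_order all_algebra.
From mathcomp Require Import all_classical all_reals all_analysis.
Set Implicit Arguments. Unset Strict Implicit. Unset Printing Implicit Defensive.
Import Order.TTheory GRing.Theory Num.Theory.
Import numFieldNormedType.Exports.
Local Open Scope classical_set_scope.
Local Open Scope ring_scope.

Section flows.
Context {R : realType} {M : metricType R}.

Definition is_flow (phi : R -> M -> M) : Prop :=
  continuous (fun q : R * M => phi q.1 q.2) /\
  (forall x, phi 0 x = x) /\
  (forall s t x, phi (s + t) x = phi s (phi t x)).

Definition Sing (phi : R -> M -> M) : set M := [set p | forall t, phi t p = p].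

Definition lyapunov_stable (phi : R -> M -> M) (p : M) : Prop :=
  forall V : set M, nbhs p V ->
    exists U : set M, nbhs p U /\ forall t x, 0 <= t -> U x -> V (phi t x).

Definition lyapunov_unstable (phi : R -> M -> M) (p : M) : Prop :=
  forall V : set M, nbhs p V ->
    exists U : set M, nbhs p U /\ forall t x, t <= 0 -> U x -> V (phi t x).

Definition pseudotraj (phi : R -> M -> M) (d : R) (xi : R -> M) : Prop :=
  forall t s, 0 <= s <= 1 -> mdist (xi (t + s)) (phi s (xi t)) < d.

Definition Rep (h : R -> R) : Prop :=
  (exists g : R -> R, cancel h g /\ cancel g h /\ continuous g) /\
  continuous h /\ {homo h : x y / x < y}.

Definition oriented_shadowing (phi : R -> M -> M) : Prop :=
  forall eps : R, 0 < eps -> exists d : R, 0 < d /\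
    forall xi : R -> M, pseudotraj phi d xi ->
      exists (x : M) (h : R -> R), Rep h /\
        forall t, mdist (xi t) (phi (h t) x) < eps.

Definition Omega_plus (phi : R -> M -> M) (p : M) (eps : R) : set M :=
  [set y | exists (xi : R -> M) (t : R),
     [/\ pseudotraj phi eps xi, mdist p (xi 0) < eps, 0 <= t & y = xi t]].

Definition Omega_minus (phi : R -> M -> M) (p : M) (eps : R) : set M :=
  [set y | exists (xi : R -> M) (t : R),
     [/\ pseudotraj phi eps xi, mdist p (xi 0) < eps, t <= 0 & y = xi t]].

End flows.

From HB Require Import structures.
From mathcomp Require Import all_boot all_order all_algebra.
From mathcomp Require Import all_classical all_reals all_analysis.
Set Implicit Arguments.
Unset Strict Implicit.
Unset Printing Implicit Defensive.

Import Order.TTheory GRing.Theory Num.Theory.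
Import numFieldNormedType.Exports.
Local Open Scope classical_set_scope.
Local Open Scope ring_scope.

(* Shadow a small pseudotrajectory starting near p by an orbit phi(h t, x).
   Its point at time h 0 is close to p, and for t >= 0 the time h t - h 0
   elapsed since then is again >= 0 because h is increasing, so Lyapunov
   stability keeps phi(h t, x), hence also the pseudotrajectory, close to p.
   The unstable case is the same argument on the negative half-line; both are
   treated at once for a time set T preserved by increasing
   reparametrizations. The reverse inclusion holds because the constant
   trajectory at a fixed point is a pseudotrajectory. *)

Section shadowing_near_fixed_point.
Context {R : realType} {M : metricType R}.
Variable phi : R -> M -> M.

Definition stable_on (T : set R) (p : M) : Prop :=
  forall V : set M, nbhs p V ->
    exists U : set M, nbhs p U /\ forall t x, T t -> U x -> V (phi t x).

Definition Omega_on (T : set R) (p : M) (eps : R) : set M :=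
  [set y | exists (xi : R -> M) (t : R),
     [/\ pseudotraj phi eps xi, mdist p (xi 0) < eps, T t & y = xi t]].

Definition reparam_invariant (T : set R) : Prop :=
  forall h : R -> R, {homo h : x y / x < y} -> forall t, T t -> T (h t - h 0).

Lemma reparam_invariant_ge0 : reparam_invariant [set t | 0 <= t].
Proof.
move=> h h_incr t /=; rewrite le_eqVlt subr_ge0 => /predU1P[<- //|t_gt0].
exact/ltW/h_incr.
Qed.

Lemma reparam_invariant_le0 : reparam_invariant [set t | t <= 0].
Proof.
move=> h h_incr t /=; rewrite le_eqVlt subr_le0 => /predU1P[-> //|t_lt0].
exact/ltW/h_incr.
Qed.

Lemma pseudotrajW (d d' : R) (xi : R -> M) :
  d <= d' -> pseudotraj phi d xi -> pseudotraj phi d' xi.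
Proof. by move=> dd' xi_pt t s s01; exact: lt_le_trans (xi_pt t s s01) dd'. Qed.

Lemma Sing_Omega_on (T : set R) (p : M) (eps : R) :
  Sing phi p -> T 0 -> 0 < eps -> Omega_on T p eps p.
Proof.
move=> p_fix T0 eps_gt0; exists (fun=> p), 0.
by split=> //[t s _|]; rewrite ?p_fix mdistxx.
Qed.

Hypothesis phiD : forall s t x, phi (s + t) x = phi s (phi t x).
Hypothesis phi_shadowing : oriented_shadowing phi.

Lemma Omega_on_small (T : set R) (p : M) :
  reparam_invariant T -> stable_on T p ->
  forall e : R, 0 < e -> exists n : nat, (0 < n)%N /\
    Omega_on T p n%:R^-1 `<=` [set y | mdist p y < e].
Proof.
move=> T_inv p_stable e e_gt0.
have e2_gt0 : 0 < e / 2 by rewrite divr_gt0.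
have [U [pU UV]] := p_stable _ (nbhsx_ballx p (e / 2) e2_gt0).
have [del del_gt0 delU] := (nbhs_ballP p U).1 pU.
pose r := Num.min del e / 2.
have r_gt0 : 0 < r by rewrite divr_gt0 // lt_min del_gt0.
have r_del : r + r <= del by rewrite -splitr ge_min lexx.
have r_e : r <= e / 2 by rewrite ler_pM2r // ge_min lexx orbT.
have [d [d_gt0 shadow]] := phi_shadowing r_gt0.
have dr_gt0 : 0 < Num.min d r by rewrite lt_min d_gt0.
have [N _ /(_ N (leqnn _))] := near_infty_natSinv_lt (PosNum dr_gt0).
rewrite /= lt_min => /andP[Nd Nr].
exists N.+1; split=> // _ [xi [t [xi_pt xi0 Tt ->]]].
have [x [h [[_ [_ h_incr]] xi_near]]] := shadow xi (pseudotrajW (ltW Nd) xi_pt).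
have U_x0 : U (phi (h 0) x).
  apply: delU; rewrite ballEmdist /=.
  apply: le_lt_trans (metric_triangle _ (xi 0) _) (lt_le_trans _ r_del).
  exact: ltrD (lt_trans xi0 Nr) (xi_near 0).
have : ball p (e / 2) (phi (h t) x).
  by rewrite -(subrK (h 0) (h t)) phiD; apply: UV U_x0; exact: T_inv.
rewrite ballEmdist /= => near_p.
apply: le_lt_trans (metric_triangle _ (phi (h t) x) _) _.
rewrite [e]splitr; apply: ltrD near_p _.
by rewrite metric_sym; exact: lt_le_trans (xi_near t) r_e.
Qed.

Lemma bigcap_Omega_on (T : set R) (p : M) :
  Sing phi p -> T 0 -> reparam_invariant T -> stable_on T p ->
  \bigcap_(n in [set n : nat | (0 < n)%N]) Omega_on T p n%:R^-1 = [set p].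
Proof.
move=> p_fix T0 T_inv p_stable; apply/seteqP; split=> [y y_Omega|_ -> n n_gt0].
- apply/esym/mdist_positivity/eqP; rewrite eq_le mdist_ge0 andbT leNgt.
  apply/negP => py_gt0.
  have [n [n_gt0 Omega_small]] := Omega_on_small T_inv p_stable py_gt0.
  by have := Omega_small _ (y_Omega n n_gt0); rewrite /= ltxx.
- by apply: Sing_Omega_on; rewrite // invr_gt0 ltr0n.
Qed.

End shadowing_near_fixed_point.

Theorem lemma4p1 (R : realType) (M : metricType R) (phi : R -> M -> M) :
  compact [set: M] -> is_flow phi -> oriented_shadowing phi ->
  forall p : M, Sing phi p ->
    (lyapunov_stable phi p ->
       \bigcap_(n in [set n : nat | (0 < n)%N]) Omega_plus phi p (n%:R)^-1 = [set p]) /\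
    (lyapunov_unstable phi p ->
       \bigcap_(n in [set n : nat | (0 < n)%N]) Omega_minus phi p (n%:R)^-1 = [set p]).
Proof.
move=> _ [_ [_ phiD]] shadowing p p_fix; split=> p_stable.
- exact: (bigcap_Omega_on (T := [set t | 0 <= t]) phiD shadowing p_fix (lexx 0)
    reparam_invariant_ge0 p_stable).
- exact: (bigcap_Omega_on (T := [set t | t <= 0]) phiD shadowing p_fix (lexx 0)
    reparam_invariant_le0 p_stable).
Qed.
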